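(* Let $(X,d)$ be a locally compact noncompact Polish space with compatible metric $d$, $A$ a nonzero C*-algebra, and $Y_n\subseteq X$ ($n\in\mathbb N$) infinite, compact, pairwise disjoint sets such that no compact subset of $X$ meets infinitely many $Y_n$. Let $\phi_n\in\mathrm{Homeo}_\partial(Y_n)$ for each $n$, let $\tilde\psi\in\mathrm{Aut}(Q(X,A))$ be canonically determined by $\{\phi_n\}$, and let $f\in\mathbb N^{\mathbb N}$. If $r(\phi_n)\ge n/f(n)$ for infinitely many $n$, then there is $c\in C_f$ with $\tilde\psi(c)\neq c$.
   Context: For closed $Y\subseteq X$, $\partial_X Y=Y\cap\overline{X\setminus Y}$ and $\mathrm{Homeo}_\partial(Y)$ is the group of homeomorphisms of $Y$ fixing every point of $\partial_XY$. Given $\phi_n\in\mathrm{Homeo}_\partial(Y_n)$ for all $n$, let $\tilde\phi$ be the homeomorphism of $X$ equal to $\phi_n$ on $Y_n$ and to the identity off $\bigcup_n Y_n$; then $\psi(g)=g\circ\tilde\phi$ defines an automorphism of $C_b(X,A)$ preserving $C_0(X,A)$, and the induced automorphism $\tilde\psi$ of $Q(X,A)=C_b(X,A)/C_0(X,A)$ is said to be canonically determined by $\{\phi_n\}$. The radius of $\phi_n$ is $r(\phi_n)=\sup_{x\in Y_n}d(x,\phi_n(x))$. $\mathbb N^{\mathbb N}$ is the set of $f\colon\mathbb N\to\mathbb N$ with all values positive; $\pi\colon C_b(X,A)\to Q(X,A)$ is the quotient map; $D_f=\{g\in C_b(X,A)\mid\forall\epsilon>0\ \exists n_0\ \forall n\ge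 n_0\ \forall x,y\in Y_n\ (d(x,y)<1/f(n)\Rightarrow\|g(x)-g(y)\|<\epsilon)\}$ and $C_f=\pi(D_f)$. *)

From Stdlib Require Import Reals Lra Lia List Classical ClassicalEpsilon.
Open Scope R_scope.

Definition Cx := (R * R)%type.
Definition Cadd (z w : Cx) : Cx := (fst z + fst w, snd z + snd w).
Definition Cmul (z w : Cx) : Cx :=
  (fst z * fst w - snd z * snd w, fst z * snd w + snd z * fst w).
Definition Cconj (z : Cx) : Cx := (fst z, - snd z).
Definition Cone : Cx := (1, 0).
Definition Cmod (z : Cx) : R := sqrt (fst z * fst z + snd z * snd z).

Record CStarAlgebra := {
  ca :> Type;
  czero : ca;
  cadd : ca -> ca -> ca;
  copp : ca -> ca;
  cmul : ca -> ca -> ca;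
  cscal : Cx -> ca -> ca;
  cstar : ca -> ca;
  cnorm : ca -> R;
  cadd_assoc : forall a b c, cadd a (cadd b c) = cadd (cadd a b) c;
  cadd_comm : forall a b, cadd a b = cadd b a;
  cadd_0 : forall a, cadd a czero = a;
  cadd_opp : forall a, cadd a (copp a) = czero;
  cscal_1 : forall a, cscal Cone a = a;
  cscal_mul : forall z w a, cscal (Cmul z w) a = cscal z (cscal w a);
  cscal_addl : forall z w a, cscal (Cadd z w) a = cadd (cscal z a) (cscal w a);
  cscal_addr : forall z a b, cscal z (cadd a b) = cadd (cscal z a) (cscal z b);
  cmul_assoc : forall a b c, cmul a (cmul b c) = cmul (cmul a b) c;
  cmul_addl : forall a b c, cmul (cadd a b) c = cadd (cmul a c) (cmul b c);
  cmul_addr : forall a b c, cmul a (cadd b c) = cadd (cmul a b) (cmul a c);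
  cmul_scall : forall z a b, cmul (cscal z a) b = cscal z (cmul a b);
  cmul_scalr : forall z a b, cmul a (cscal z b) = cscal z (cmul a b);
  cstar_inv : forall a, cstar (cstar a) = a;
  cstar_add : forall a b, cstar (cadd a b) = cadd (cstar a) (cstar b);
  cstar_scal : forall z a, cstar (cscal z a) = cscal (Cconj z) (cstar a);
  cstar_mul : forall a b, cstar (cmul a b) = cmul (cstar b) (cstar a);
  cnorm_nonneg : forall a, 0 <= cnorm a;
  cnorm_eq0 : forall a, cnorm a = 0 -> a = czero;
  cnorm_scal : forall z a, cnorm (cscal z a) = Cmod z * cnorm a;
  cnorm_triangle : forall a b, cnorm (cadd a b) <= cnorm a + cnorm b;
  cnorm_submult : forall a b, cnorm (cmul a b) <= cnorm a * cnorm b;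
  cnorm_cstar : forall a, cnorm (cmul (cstar a) a) = cnorm a * cnorm a;
  ccomplete : forall u : nat -> ca,
    (forall eps, eps > 0 -> exists N, forall m n, (m >= N)%nat -> (n >= N)%nat ->
        cnorm (cadd (u m) (copp (u n))) < eps) ->
    exists l, forall eps, eps > 0 -> exists N, forall n, (n >= N)%nat ->
        cnorm (cadd (u n) (copp l)) < eps
}.

Definition csub (A : CStarAlgebra) (a b : A) : A := cadd A a (copp A b).

Definition is_metric {X : Type} (d : X -> X -> R) : Prop :=
  (forall x y, 0 <= d x y) /\ (forall x y, d x y = 0 <-> x = y) /\
  (forall x y, d x y = d y x) /\ (forall x y z, d x z <= d x y + d y z).

Definition is_open {X : Type} (d : X -> X -> R) (U : X -> Prop) : Prop :=
  forall x, U x -> exists eps, eps > 0 /\ forall y, d x y < eps -> U y.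

Definition is_compact {X : Type} (d : X -> X -> R) (K : X -> Prop) : Prop :=
  forall (I : Type) (U : I -> X -> Prop),
    (forall i, is_open d (U i)) ->
    (forall x, K x -> exists i, U i x) ->
    exists l : list I, forall x, K x -> exists i, In i l /\ U i x.

Definition in_closure {X : Type} (d : X -> X -> R) (S : X -> Prop) (x : X) : Prop :=
  forall eps, eps > 0 -> exists y, S y /\ d x y < eps.

Definition boundary {X : Type} (d : X -> X -> R) (Y : X -> Prop) (x : X) : Prop :=
  Y x /\ in_closure d (fun y => ~ Y y) x.

Definition locally_compact {X : Type} (d : X -> X -> R) : Prop :=
  forall x, exists K U, is_compact d K /\ is_open d U /\ U x /\ (forall y, U y -> K y).

Definition separable {X : Type} (d : X -> X -> R) : Prop :=
  exists D : nat -> X, forall x, in_closure d (fun y => exists n, y = D n) x.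

Definition complete_metric {X : Type} (d : X -> X -> R) : Prop :=
  forall u : nat -> X,
    (forall eps, eps > 0 -> exists N, forall m n, (m >= N)%nat -> (n >= N)%nat ->
        d (u m) (u n) < eps) ->
    exists l, forall eps, eps > 0 -> exists N, forall n, (n >= N)%nat -> d (u n) l < eps.

(* Polish: separable and completely metrizable (the metric d is only assumed
   compatible, not complete) *)
Definition polish {X : Type} (d : X -> X -> R) : Prop :=
  separable d /\
  exists d' : X -> X -> R, is_metric d' /\ complete_metric d' /\
    (forall U, is_open d U <-> is_open d' U).

Definition continuous_on {X : Type} (d : X -> X -> R) (Y : X -> Prop) (h : X -> X) : Prop :=
  forall x, Y x -> forall eps, eps > 0 -> exists delta, delta > 0 /\
    forall y, Y y -> d x y < delta -> d (h x) (h y) < eps.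

(* h (a map X -> X, of which only the restriction to Y matters) restricts to
   an element of Homeo_∂(Y) *)
Definition homeo_partial {X : Type} (d : X -> X -> R) (Y : X -> Prop) (h : X -> X) : Prop :=
  (forall x, Y x -> Y (h x)) /\
  (exists hinv : X -> X,
     (forall x, Y x -> Y (hinv x)) /\
     (forall x, Y x -> hinv (h x) = x) /\
     (forall x, Y x -> h (hinv x) = x) /\
     continuous_on d Y h /\ continuous_on d Y hinv) /\
  (forall x, boundary d Y x -> h x = x).

Definition glue {X : Type} (Y : nat -> X -> Prop) (phi : nat -> X -> X) (x : X) : X :=
  match excluded_middle_informative (exists n, Y n x) with
  | left H => phi (proj1_sig (constructive_indefinite_description _ H)) x
  | right _ => x
  end.

Definition is_radius {X : Type} (d : X -> X -> R) (Y : X -> Prop) (h : X -> X) (r : R) : Prop :=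
  is_lub (fun t => exists x, Y x /\ t = d x (h x)) r.

Definition in_Cb {X : Type} (d : X -> X -> R) (A : CStarAlgebra) (g : X -> A) : Prop :=
  (forall x eps, eps > 0 -> exists delta, delta > 0 /\
     forall y, d x y < delta -> cnorm A (csub A (g x) (g y)) < eps) /\
  (exists M, forall x, cnorm A (g x) <= M).

Definition in_C0 {X : Type} (d : X -> X -> R) (A : CStarAlgebra) (g : X -> A) : Prop :=
  in_Cb d A g /\
  forall eps, eps > 0 -> exists K, is_compact d K /\
    forall x, ~ K x -> cnorm A (g x) < eps.

Definition in_Df {X : Type} (d : X -> X -> R) (A : CStarAlgebra) (Y : nat -> X -> Prop)
  (f : nat -> nat) (g : X -> A) : Prop :=
  in_Cb d A g /\
  forall eps, eps > 0 -> exists n0, forall n, (n >= n0)%nat ->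
    forall x y, Y n x -> Y n y -> d x y < 1 / INR (f n) ->
      cnorm A (csub A (g x) (g y)) < eps.

From Stdlib Require Import Reals List Lra Lia Classical ClassicalEpsilon.
Open Scope R_scope.

(* Pick pieces Y_(n_k), n_k strictly increasing, each containing a point x_k
   that phi moves by r_k > n_k / (2 f(n_k)); the radius bound makes this
   possible.  The cone of radius r_k at x_k equals 1 at x_k, vanishes at
   phi(x_k), and is (1/r_k)-Lipschitz, so on Y_(n_k) its oscillation at scale
   1/f(n_k) is at most 2/n_k.  Cutting each cone off near its piece and taking
   the (locally finite) maximum gives a continuous H : X -> [0,1] equal to the
   k-th cone on Y_(n_k) and to 0 on the remaining pieces.  Then g = H a lies in
   D_f, while g o phi~ - g has norm ||a|| at every x_k; as no compact set meets
   infinitely many pieces, it does not vanish at infinity. *)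

Lemma is_lub_approx (E : R -> Prop) (r s : R) :
  is_lub E r -> s < r -> exists t, E t /\ s < t.
Proof.
  intros [_ Hleast] Hsr. apply NNPP; intro Hno.
  assert (r <= s); [|lra].
  apply Hleast. intros t Et. apply Rnot_lt_le. intro Hst. apply Hno. eauto.
Qed.

Definition strictly_increasing (nk : nat -> nat) : Prop :=
  forall i j, (i < j)%nat -> (nk i < nk j)%nat.

Lemma strictly_increasing_subsequence (P : nat -> Prop) :
  (forall N, exists n, (n >= N)%nat /\ P n) ->
  exists nk : nat -> nat, (forall k, P (nk k)) /\ strictly_increasing nk.
Proof.
  intros HP. destruct (choice _ HP) as [s Hs].
  set (nk := fun k => Nat.iter k (fun m => s (S m)) (s 0%nat)).
  assert (Hstep : forall k, nk (S k) = s (S (nk k))) by reflexivity.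
  exists nk. split.
  - intros [|k]; [apply Hs|rewrite Hstep; apply Hs].
  - intros i j Hij. induction Hij as [|j Hij IH]; rewrite Hstep;
      [specialize (Hs (S (nk i)))|specialize (Hs (S (nk j)))]; lia.
Qed.

Lemma strictly_increasing_ge (nk : nat -> nat) :
  strictly_increasing nk -> forall k, (nk k >= k)%nat.
Proof. intros Hincr k. induction k; [lia|]. specialize (Hincr k (S k)). lia. Qed.

Lemma strictly_increasing_inj (nk : nat -> nat) :
  strictly_increasing nk -> forall i j, nk i = nk j -> i = j.
Proof.
  intros Hincr i j E. destruct (Nat.lt_trichotomy i j) as [Hl|[He|Hl]]; auto;
    specialize (Hincr _ _ Hl); lia.
Qed.

Lemma ex_pos_uniform_finite (Q : nat -> R -> Prop) :
  (forall m e e', 0 < e' <= e -> Q m e -> Q m e') ->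
  forall N, (forall m, (m < N)%nat -> exists e, e > 0 /\ Q m e) ->
  exists e, e > 0 /\ forall m, (m < N)%nat -> Q m e.
Proof.
  intros Hmono N. induction N as [|N IH]; intros HQ.
  - exists 1. split; [lra|]. intros; lia.
  - destruct IH as [e [He HeQ]]; [intros m Hm; apply HQ; lia|].
    destruct (HQ N) as [e' [He' He'Q]]; [lia|].
    exists (Rmin e e'). split; [apply Rmin_pos; lra|].
    intros m Hm. destruct (Nat.eq_dec m N) as [->|Hne].
    + apply (Hmono N e'); auto. split; [apply Rmin_pos; lra|apply Rmin_r].
    + apply (Hmono m e); [split; [apply Rmin_pos; lra|apply Rmin_l]|]. apply HeQ. lia.
Qed.

Section MaxUpto.

Context {X : Type} (b : nat -> X -> R).
Hypothesis Hb : forall k z, 0 <= b k z <= 1.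

Fixpoint max_upto (M : nat) (z : X) : R :=
  match M with
  | 0%nat => 0
  | S M' => Rmax (max_upto M' z) (b M' z)
  end.

Lemma max_upto_bounds M z : 0 <= max_upto M z <= 1.
Proof.
  induction M; simpl; [lra|]. specialize (Hb M z).
  unfold Rmax; destruct Rle_dec; lra.
Qed.

Lemma max_upto_vanish M z :
  (forall k, (k < M)%nat -> b k z = 0) -> max_upto M z = 0.
Proof.
  induction M; intros Hz; simpl; [reflexivity|].
  rewrite IHM, Hz; [apply Rmax_left; lra|lia|intros; apply Hz; lia].
Qed.

Lemma max_upto_stable M z :
  (forall k, (k >= M)%nat -> b k z = 0) ->
  forall M', (M' >= M)%nat -> max_upto M' z = max_upto M z.
Proof.
  intros Hz M' HM'. induction HM' as [|M' HM' IH]; simpl; [reflexivity|].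
  rewrite IH, Hz by lia. apply Rmax_left, max_upto_bounds.
Qed.

Lemma max_upto_single k0 z :
  (forall k, k <> k0 -> b k z = 0) ->
  forall M, (M > k0)%nat -> max_upto M z = b k0 z.
Proof.
  intros Hz M HM. induction HM as [|M HM IH]; simpl.
  - rewrite max_upto_vanish by (intros; apply Hz; lia). apply Rmax_right, Hb.
  - rewrite IH, (Hz M) by lia. apply Rmax_left, Hb.
Qed.

End MaxUpto.

Section MetricFunctions.

Context {X : Type} (d : X -> X -> R).
Hypothesis Hd : is_metric d.

Lemma dist_ge0 x y : 0 <= d x y.
Proof. apply Hd. Qed.

Lemma dist_self x : d x x = 0.
Proof. apply Hd. reflexivity. Qed.

Lemma dist_sym x y : d x y = d y x.
Proof. apply Hd. Qed.

Lemma dist_triangle x y z : d x z <= d x y + d y z.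
Proof. apply Hd. Qed.

Definition lipschitz (L : R) (F : X -> R) : Prop :=
  forall x y, Rabs (F x - F y) <= L * d x y.

Definition continuous_real (F : X -> R) : Prop :=
  forall x eps, eps > 0 -> exists delta, delta > 0 /\
    forall y, d x y < delta -> Rabs (F x - F y) < eps.

Lemma lipschitz_continuous L F : lipschitz L F -> continuous_real F.
Proof.
  intros HF x eps Heps.
  set (L' := Rabs L + 1). assert (HL' : L' > 0) by (unfold L'; pose proof (Rabs_pos L); lra).
  exists (eps / L'). split; [apply Rdiv_lt_0_compat; lra|].
  intros y Hy. eapply Rle_lt_trans; [apply HF|].
  assert (Hy' : L' * d x y < eps).
  { apply (Rmult_lt_compat_l L') in Hy; [|lra].
    replace (L' * (eps / L')) with eps in Hy by (field; lra). exact Hy. }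
  pose proof (dist_ge0 x y). pose proof (RRle_abs L). unfold L' in Hy'. nra.
Qed.

Lemma lipschitz_weaken L L' F : L <= L' -> lipschitz L F -> lipschitz L' F.
Proof.
  intros HLL' HF x y. eapply Rle_trans; [apply HF|].
  apply Rmult_le_compat_r; [apply dist_ge0|exact HLL'].
Qed.

Lemma lipschitz_max L F G :
  lipschitz L F -> lipschitz L G -> lipschitz L (fun z => Rmax (F z) (G z)).
Proof.
  intros HF HG x y. specialize (HF x y). specialize (HG x y).
  unfold Rmax, Rabs in *. repeat destruct Rle_dec; repeat destruct Rcase_abs; lra.
Qed.

Lemma lipschitz_min L F G :
  lipschitz L F -> lipschitz L G -> lipschitz L (fun z => Rmin (F z) (G z)).
Proof.
  intros HF HG x y. specialize (HF x y). specialize (HG x y).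
  unfold Rmin, Rabs in *. repeat destruct Rle_dec; repeat destruct Rcase_abs; lra.
Qed.

Lemma lipschitz_scal c L F : lipschitz L F -> lipschitz (Rabs c * L) (fun z => c * F z).
Proof.
  intros HF x y. rewrite <- Rmult_minus_distr_l, Rabs_mult, Rmult_assoc.
  apply Rmult_le_compat_l; [apply Rabs_pos|apply HF].
Qed.

Lemma dist_lipschitz p : lipschitz 1 (fun z => d z p).
Proof.
  intros x y. pose proof (dist_triangle x y p). pose proof (dist_triangle y x p).
  rewrite (dist_sym y x) in *. unfold Rabs; destruct Rcase_abs; lra.
Qed.

Definition cone (c : X) (r : R) (z : X) : R := Rmax 0 (1 - d z c / r).

Section Cone.

Variables (c : X) (r : R).
Hypothesis Hr : r > 0.

Lemma cone_lipschitz : lipschitz (/ r) (cone c r).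
Proof.
  intros x y. unfold cone. pose proof (dist_lipschitz c x y) as Hxy.
  assert (Hr' : / r > 0) by (apply Rinv_0_lt_compat; lra).
  assert (E : (1 - d y c / r) - (1 - d x c / r) = (d x c - d y c) * / r) by (field; lra).
  assert (Hdiff : Rabs ((1 - d y c / r) - (1 - d x c / r)) <= / r * d x y).
  { rewrite E, Rabs_mult, (Rabs_right (/ r)) by lra. nra. }
  revert Hdiff. unfold Rmax, Rabs. repeat destruct Rle_dec; repeat destruct Rcase_abs; lra.
Qed.

Lemma cone_bounds z : 0 <= cone c r z <= 1.
Proof.
  unfold cone. assert (d z c / r >= 0).
  { apply Rle_ge, Rmult_le_pos; [apply dist_ge0|left; apply Rinv_0_lt_compat; lra]. }
  unfold Rmax; destruct Rle_dec; lra.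
Qed.

Lemma cone_center : cone c r c = 1.
Proof.
  unfold cone. rewrite dist_self. replace (1 - 0 / r) with 1 by (field; lra).
  unfold Rmax; destruct Rle_dec; lra.
Qed.

Lemma cone_far z : d z c >= r -> cone c r z = 0.
Proof.
  intros Hz. unfold cone. assert (d z c / r >= 1).
  { apply Rle_ge. apply Rmult_le_reg_r with r; [lra|]. field_simplify; lra. }
  unfold Rmax; destruct Rle_dec; lra.
Qed.

Lemma cone_near z : d z c <= r / 2 -> cone c r z >= 1 / 2.
Proof.
  intros Hz. unfold cone. assert (d z c / r <= 1 / 2).
  { apply Rmult_le_reg_r with r; [lra|]. field_simplify; lra. }
  unfold Rmax; destruct Rle_dec; lra.
Qed.

Lemma cone_drop z : d z c >= r -> Rabs (cone c r z - cone c r c) = 1.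
Proof.
  intros Hz. rewrite cone_far, cone_center by assumption.
  rewrite Rminus_0_l, Rabs_Ropp. apply Rabs_R1.
Qed.

End Cone.

Lemma cone_oscillation (c : X) (r n fn : R) x y :
  0 < n -> 0 < fn -> r > n / (2 * fn) -> d x y < 1 / fn ->
  Rabs (cone c r x - cone c r y) <= 2 / n.
Proof.
  intros Hn Hfn Hr Hxy.
  assert (Hr' : 2 * fn * r > n).
  { apply (Rmult_gt_compat_l (2 * fn)) in Hr; [|lra].
    replace (2 * fn * (n / (2 * fn))) with n in Hr by (field; lra). exact Hr. }
  assert (Hxy' : d x y * fn < 1).
  { apply (Rmult_lt_compat_r fn) in Hxy; [|lra].
    replace (1 / fn * fn) with 1 in Hxy by (field; lra). exact Hxy. }
  assert (Hrpos : r > 0) by (pose proof (dist_ge0 x y); nra).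
  eapply Rle_trans; [apply cone_lipschitz; exact Hrpos|].
  assert (Hgoal : n * d x y <= 2 * r) by (pose proof (dist_ge0 x y); nra).
  apply (Rmult_le_reg_r (r * n)); [nra|].
  replace (/ r * d x y * (r * n)) with (n * d x y) by (field; lra).
  replace (2 / n * (r * n)) with (2 * r) by (field; lra). exact Hgoal.
Qed.

Definition cover_fun (l : list (X * R)) (z : X) : R :=
  fold_right (fun p acc => Rmax (cone (fst p) (snd p) z) acc) 0 l.

Section CoverFun.

Variable l : list (X * R).

Lemma cover_fun_nonneg z : 0 <= cover_fun l z.
Proof.
  induction l as [|q l' IH]; simpl; [lra|]. apply (Rle_trans _ _ _ IH), Rmax_r.
Qed.

Lemma cover_fun_ge_cone p z : In p l -> cone (fst p) (snd p) z <= cover_fun l z.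
Proof.
  induction l as [|q l' IH]; simpl; [tauto|]. intros [->|Hp].
  - apply Rmax_l.
  - apply (Rle_trans _ _ _ (IH Hp)), Rmax_r.
Qed.

Hypothesis Hl : forall p, In p l -> snd p > 0.

Lemma cover_fun_far z : (forall p, In p l -> d z (fst p) >= snd p) -> cover_fun l z = 0.
Proof.
  induction l as [|q l' IH]; simpl; intros Hfar; [reflexivity|].
  rewrite IH, cone_far; try (intros; (apply Hl || apply Hfar); simpl; auto).
  apply Rmax_left. lra.
Qed.

Lemma cover_fun_pos z : 0 < cover_fun l z -> exists p, In p l /\ d z (fst p) < snd p.
Proof.
  intros Hpos. apply NNPP; intro Hno.
  rewrite cover_fun_far in Hpos; [lra|].
  intros p Hp. apply Rnot_lt_ge. intro Hlt. apply Hno. eauto.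
Qed.

Lemma cover_fun_lipschitz : exists L, lipschitz L (cover_fun l).
Proof.
  induction l as [|q l' IH]; simpl.
  - exists 0. intros x y. rewrite Rminus_diag, Rabs_R0. lra.
  - destruct IH as [L HL]; [intros; apply Hl; simpl; auto|].
    exists (Rmax (/ snd q) L). apply lipschitz_max.
    + apply lipschitz_weaken with (L := / snd q); [apply Rmax_l|].
      apply cone_lipschitz, Hl. simpl; auto.
    + apply lipschitz_weaken with (L := L); [apply Rmax_r|exact HL].
Qed.

End CoverFun.

Lemma max_upto_lipschitz (b : nat -> X -> R) M :
  (forall k, exists L, lipschitz L (b k)) -> exists L, lipschitz L (max_upto b M).
Proof.
  intros Hlip. induction M as [|M [L HL]]; simpl.
  - exists 0. intros x y. rewrite Rminus_diag, Rabs_R0. lra.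
  - destruct (Hlip M) as [L' HL']. exists (Rmax L L'). apply lipschitz_max.
    + apply lipschitz_weaken with (L := L); [apply Rmax_l|exact HL].
    + apply lipschitz_weaken with (L := L'); [apply Rmax_r|exact HL'].
Qed.

Lemma locally_finite_max (b : nat -> X -> R) :
  (forall k z, 0 <= b k z <= 1) ->
  (forall k, exists L, lipschitz L (b k)) ->
  (forall x, exists e, e > 0 /\ exists M,
      forall z, d x z < e -> forall k, (k >= M)%nat -> b k z = 0) ->
  exists H : X -> R, continuous_real H /\ (forall z, 0 <= H z <= 1) /\
    (forall z M, (forall k, (k >= M)%nat -> b k z = 0) -> H z = max_upto b M z).
Proof.
  intros Hb Hlip Hloc.
  assert (Hev : forall z, exists M, forall k, (k >= M)%nat -> b k z = 0).
  { intros z. destruct (Hloc z) as [e [He [M HM]]]. exists M.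
    apply HM. rewrite dist_self. lra. }
  destruct (choice _ Hev) as [Mz HMz].
  assert (Hindep : forall z M, (forall k, (k >= M)%nat -> b k z = 0) ->
                     max_upto b (Mz z) z = max_upto b M z).
  { intros z M HM.
    rewrite <- (max_upto_stable b Hb M z HM (Nat.max M (Mz z))) by lia.
    symmetry. apply (max_upto_stable b Hb (Mz z) z (HMz z)). lia. }
  exists (fun z => max_upto b (Mz z) z). split; [|split].
  - intros x eps Heps. destruct (Hloc x) as [e [He [M HM]]].
    destruct (max_upto_lipschitz b M Hlip) as [L HL].
    destruct (lipschitz_continuous L _ HL x eps Heps) as [delta [Hdelta Hcont]].
    exists (Rmin e delta). split; [apply Rmin_pos; lra|].
    intros y Hy. pose proof (Rmin_l e delta). pose proof (Rmin_r e delta).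
    rewrite (Hindep x M), (Hindep y M); [apply Hcont; lra| |].
    + apply HM. lra.
    + apply HM. rewrite dist_self. lra.
  - intros z. apply max_upto_bounds, Hb.
  - exact Hindep.
Qed.

Lemma compact_dist_pos (C : X -> Prop) y :
  is_compact d C -> ~ C y -> exists eps, eps > 0 /\ forall z, C z -> d y z >= eps.
Proof.
  intros HC Hy.
  destruct (HC nat (fun j z => d y z > / INR (S j))) as [l Hl].
  - intros j z Hjz. exists (d y z - / INR (S j)). split; [lra|].
    intros w Hw. pose proof (dist_triangle y w z). rewrite (dist_sym w z) in *. lra.
  - intros z Cz. assert (Hpos : d y z > 0).
    { destruct (dist_ge0 y z) as [|E]; auto.
      exfalso. apply Hy. replace y with z; auto. symmetry. apply Hd. auto. }
    destruct (archimed_cor1 (d y z) Hpos) as [N [HN1 HN2]].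
    exists (pred N). replace (S (pred N)) with N by lia. lra.
  - exists (/ INR (S (list_max l))). split.
    { apply Rinv_0_lt_compat, lt_0_INR. lia. }
    intros z Cz. destruct (Hl z Cz) as [j [Hj Hjz]].
    assert (j <= list_max l)%nat.
    { pose proof (proj1 (list_max_le l (list_max l)) (le_n _)) as Hmax.
      rewrite Forall_forall in Hmax. auto. }
    assert (/ INR (S (list_max l)) <= / INR (S j)).
    { apply Rinv_le_contravar; [apply lt_0_INR; lia|apply le_INR; lia]. }
    lra.
Qed.

End MetricFunctions.

Definition disjoint_family {X : Type} (Y : nat -> X -> Prop) : Prop :=
  forall m n, m <> n -> forall x, Y m x -> Y n x -> False.

Definition locally_finite_family {X : Type} (d : X -> X -> R) (Y : nat -> X -> Prop) : Prop :=
  forall K, is_compact d K ->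
    ~ (forall N, exists n, (n >= N)%nat /\ exists x, Y n x /\ K x).

Section Separation.

Context {X : Type} (d : X -> X -> R) (Y : nat -> X -> Prop).
Hypothesis Hd : is_metric d.
Hypothesis Hlc : locally_compact d.
Hypothesis HYc : forall n, is_compact d (Y n).
Hypothesis HYdisj : disjoint_family Y.
Hypothesis HYlf : locally_finite_family d Y.

Lemma locally_finite_tail K :
  is_compact d K -> exists N, forall m, (m >= N)%nat -> forall z, Y m z -> ~ K z.
Proof.
  intros HK. apply NNPP; intro Hno. apply (HYlf K HK). intros N.
  apply NNPP; intro HN. apply Hno. exists N. intros m Hm z Hz Kz.
  apply HN. exists m. split; [exact Hm|]. exists z. auto.
Qed.

Lemma eventually_far x :
  exists e, e > 0 /\ exists N, forall m, (m >= N)%nat -> forall z, Y m z -> d x z >= e.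
Proof.
  destruct (Hlc x) as [K [U [HK [HU [Ux HUK]]]]].
  destruct (HU x Ux) as [e [He Hball]].
  destruct (locally_finite_tail K HK) as [N HN].
  exists e. split; [exact He|]. exists N. intros m Hm z Hz.
  apply Rnot_lt_ge. intro Hxz. apply (HN m Hm z Hz). auto.
Qed.

Lemma far_from_other_pieces n y :
  Y n y -> exists e, e > 0 /\ forall m, m <> n -> forall z, Y m z -> d y z >= e.
Proof.
  intros Hy. destruct (eventually_far y) as [e0 [He0 [N HN]]].
  destruct (ex_pos_uniform_finite
              (fun m e => m <> n -> forall z, Y m z -> d y z >= e)) with N
    as [e1 [He1 Hsmall]].
  - intros m e e' He' Hm Hmn z Hz. specialize (Hm Hmn z Hz). lra.
  - intros m _. destruct (Nat.eq_dec m n) as [->|Hmn].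
    + exists 1. split; [lra|]. tauto.
    + destruct (compact_dist_pos d Hd (Y m) y (HYc m)) as [e [He Hfar]].
      { intro Hym. exact (HYdisj m n Hmn y Hym Hy). }
      exists e. auto.
  - exists (Rmin e0 e1). split; [apply Rmin_pos; lra|].
    intros m Hmn z Hz. pose proof (Rmin_l e0 e1). pose proof (Rmin_r e0 e1).
    destruct (Nat.lt_ge_cases m N) as [Hlt|Hge].
    + specialize (Hsmall m Hlt Hmn z Hz). lra.
    + specialize (HN m Hge z Hz). lra.
Qed.

(* The radius bound [/ INR (S n)] makes the balls for large [n] shrink, which is
   what keeps the cut-off functions built from them locally finite. *)
Definition isolating_ball (n : nat) (p : X * R) : Prop :=
  Y n (fst p) /\ 0 < snd p <= / INR (S n) /\
  forall m, m <> n -> forall z, Y m z -> d (fst p) z >= snd p.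

Lemma isolating_cover n :
  exists l, (forall p, In p l -> isolating_ball n p) /\
    forall z, Y n z -> exists p, In p l /\ d z (fst p) <= snd p / 2.
Proof.
  destruct (HYc n {p | isolating_ball n p}
              (fun p z => d (fst (proj1_sig p)) z < snd (proj1_sig p) / 2)) as [l Hl].
  - intros [p Hp] z Hz. cbn in *. exists (snd p / 2 - d (fst p) z). split; [lra|].
    intros w Hw. pose proof (dist_triangle d Hd (fst p) z w). lra.
  - intros z Hz. destruct (far_from_other_pieces n z Hz) as [e [He Hfar]].
    assert (Hball : isolating_ball n (z, Rmin e (/ INR (S n)))).
    { assert (Hinv : / INR (S n) > 0) by (apply Rinv_0_lt_compat, lt_0_INR; lia).
      pose proof (Rmin_l e (/ INR (S n))). pose proof (Rmin_r e (/ INR (S n))).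
      unfold isolating_ball; cbn [fst snd].
      split; [exact Hz|]. split; [split; [apply Rmin_pos; lra|lra]|].
      intros m Hmn w Hw. specialize (Hfar m Hmn w Hw). lra. }
    exists (exist _ _ Hball). cbn. rewrite (dist_self d Hd).
    destruct Hball as [_ [[Hr _] _]]. cbn in Hr. lra.
  - exists (map (@proj1_sig _ _) l). split.
    + intros p Hp. apply in_map_iff in Hp. destruct Hp as [[q Hq] [<- _]]. exact Hq.
    + intros z Hz. destruct (Hl z Hz) as [p [Hp Hpz]].
      exists (proj1_sig p). split; [apply in_map, Hp|].
      rewrite (dist_sym d Hd). lra.
Qed.

Lemma isolating_covers_vanish (L : nat -> list (X * R)) :
  (forall n p, In p (L n) -> isolating_ball n p) ->
  forall x, exists e, e > 0 /\ exists M,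
    forall z, d x z < e -> forall n, (n >= M)%nat -> cover_fun d (L n) z = 0.
Proof.
  intros HL x. destruct (eventually_far x) as [e [He [N HN]]].
  destruct (archimed_cor1 (e / 2)) as [M0 [HM0 HM0pos]]; [lra|].
  exists (e / 2). split; [lra|]. exists (Nat.max N M0).
  intros z Hxz n Hn. apply Rle_antisym; [|apply cover_fun_nonneg].
  apply Rnot_lt_le. intro Hpos.
  destruct (cover_fun_pos d (L n)) with z as [p [Hp Hzp]];
    [intros q Hq; apply (HL n q Hq)|exact Hpos|].
  destruct (HL n p Hp) as [HYp [[_ Hsmall] _]].
  assert (/ INR (S n) <= / INR M0).
  { apply Rinv_le_contravar; [apply lt_0_INR; lia|apply le_INR; lia]. }
  specialize (HN n ltac:(lia) (fst p) HYp).
  pose proof (dist_triangle d Hd x z (fst p)). lra.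
Qed.

Lemma cover_fun_off_piece n l m z :
  (forall p, In p l -> isolating_ball n p) -> m <> n -> Y m z -> cover_fun d l z = 0.
Proof.
  intros Hl Hmn Hz. apply cover_fun_far; intros p Hp; destruct (Hl p Hp) as [_ [Hr Hiso]].
  - apply Hr.
  - rewrite (dist_sym d Hd). apply (Hiso m Hmn z Hz).
Qed.

Lemma cone_extension (nk : nat -> nat) (c : nat -> X) (r : nat -> R) :
  strictly_increasing nk -> (forall k, r k > 0) ->
  exists H : X -> R, continuous_real d H /\ (forall z, 0 <= H z <= 1) /\
    (forall k z, Y (nk k) z -> H z = cone d (c k) (r k) z) /\
    (forall m z, Y m z -> (forall k, nk k <> m) -> H z = 0).
Proof.
  intros Hincr Hr.
  destruct (choice _ isolating_cover) as [L HL].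
  assert (HLball : forall n p, In p (L n) -> isolating_ball n p) by apply HL.
  assert (HLpos : forall n p, In p (L n) -> snd p > 0) by apply HLball.
  (* On [Y (nk k)] the factor 2 lifts the cut-off to at least 1, above the cone. *)
  set (b := fun k z => Rmin (2 * cover_fun d (L (nk k)) z) (cone d (c k) (r k) z)).
  assert (Hb : forall k z, 0 <= b k z <= 1).
  { intros k z. pose proof (cover_fun_nonneg d (L (nk k)) z).
    pose proof (cone_bounds d Hd (c k) (r k) (Hr k) z).
    unfold b, Rmin; destruct Rle_dec; lra. }
  assert (Hb_on : forall k z, Y (nk k) z -> b k z = cone d (c k) (r k) z).
  { intros k z Hz. destruct (HL (nk k)) as [_ Hcov]. destruct (Hcov z Hz) as [p [Hp Hzp]].
    pose proof (cone_near d (fst p) (snd p) (HLpos _ p Hp) z Hzp).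
    pose proof (cover_fun_ge_cone d (L (nk k)) p z Hp).
    pose proof (cone_bounds d Hd (c k) (r k) (Hr k) z).
    apply Rmin_right. lra. }
  assert (Hb_zero : forall k z, cover_fun d (L (nk k)) z = 0 -> b k z = 0).
  { intros k z Hz. unfold b. rewrite Hz, Rmult_0_r.
    apply Rmin_left, (cone_bounds d Hd); auto. }
  assert (Hb_off : forall k m z, m <> nk k -> Y m z -> b k z = 0).
  { intros k m z Hm Hz. apply Hb_zero, (cover_fun_off_piece (nk k) _ m); auto. }
  assert (Hb_lip : forall k, exists L, lipschitz d L (b k)).
  { intros k. destruct (cover_fun_lipschitz d Hd (L (nk k)) (HLpos _)) as [Lc HLc].
    exists (Rmax (Rabs 2 * Lc) (/ r k)). apply lipschitz_min.
    - apply (lipschitz_weaken d Hd) with (L := Rabs 2 * Lc); [apply Rmax_l|].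
      apply lipschitz_scal, HLc.
    - apply (lipschitz_weaken d Hd) with (L := / r k); [apply Rmax_r|].
      apply cone_lipschitz; auto. }
  destruct (locally_finite_max d Hd b Hb Hb_lip) as [H [Hcont [H01 HH]]].
  { intros x. destruct (isolating_covers_vanish L HLball x) as [e [He [M HM]]].
    exists e. split; [exact He|]. exists M. intros z Hz k Hk. apply Hb_zero, HM; auto.
    pose proof (strictly_increasing_ge nk Hincr k). lia. }
  exists H. split; [exact Hcont|]. split; [exact H01|]. split.
  - intros k z Hz. rewrite <- (Hb_on k z Hz).
    assert (Hothers : forall j, j <> k -> b j z = 0).
    { intros j Hj. apply (Hb_off j (nk k)); auto.
      intro E. apply Hj, (strictly_increasing_inj nk Hincr). auto. }
    rewrite (HH z (S k)), (max_upto_single b Hb k z Hothers); [reflexivity|lia|].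
    intros j Hj. apply Hothers. lia.
  - intros m z Hz Hm. rewrite (HH z 0%nat); [reflexivity|].
    intros k _. apply (Hb_off k m); auto.
Qed.

Lemma piecewise_cone_oscillation (H : X -> R) (nk f : nat -> nat) (c : nat -> X) (r : nat -> R) :
  (forall n, (f n > 0)%nat) ->
  (forall k, r k > INR (nk k) / (2 * INR (f (nk k)))) ->
  (forall k z, Y (nk k) z -> H z = cone d (c k) (r k) z) ->
  (forall m z, Y m z -> (forall k, nk k <> m) -> H z = 0) ->
  forall n x y, (n >= 1)%nat -> Y n x -> Y n y -> d x y < 1 / INR (f n) ->
    Rabs (H x - H y) <= 2 / INR n.
Proof.
  intros Hf Hr Hon Hoff n x y Hn Hx Hy Hxy.
  destruct (classic (exists k, nk k = n)) as [[k <-]|Hno].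
  - rewrite (Hon k x Hx), (Hon k y Hy).
    apply (cone_oscillation d Hd) with (fn := INR (f (nk k))); auto;
      apply lt_0_INR; [lia|apply Hf].
  - rewrite (Hoff n x Hx), (Hoff n y Hy) by eauto.
    rewrite Rminus_diag, Rabs_R0. apply Rlt_le, Rdiv_lt_0_compat; [lra|apply lt_0_INR; lia].
Qed.

End Separation.

Lemma glue_on_piece {X : Type} (Y : nat -> X -> Prop) (phi : nat -> X -> X) n x :
  disjoint_family Y -> Y n x -> glue Y phi x = phi n x.
Proof.
  intros HYdisj Hx. unfold glue. destruct excluded_middle_informative as [Hex|Hno].
  - destruct (constructive_indefinite_description _ Hex) as [m Hm]. cbn.
    destruct (Nat.eq_dec m n) as [->|Hmn]; [reflexivity|].
    exfalso. exact (HYdisj m n Hmn x Hm Hx).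
  - exfalso. apply Hno. exists n. exact Hx.
Qed.

Lemma displaced_points_often {X : Type} (d : X -> X -> R) (Y : nat -> X -> Prop)
    (phi : nat -> X -> X) (f : nat -> nat) :
  (forall n, (f n > 0)%nat) ->
  (forall N, exists n, (n >= N)%nat /\
     exists r, is_radius d (Y n) (phi n) r /\ r >= INR n / INR (f n)) ->
  forall N, exists n, (n >= N)%nat /\ (n >= 1)%nat /\
     exists x, Y n x /\ d x (phi n x) > INR n / (2 * INR (f n)).
Proof.
  intros Hf Hrad N. destruct (Hrad (Nat.max N 1)) as [n [Hn [r [Hr Hrn]]]].
  assert (Hratio : INR n / INR (f n) > 0).
  { apply Rdiv_lt_0_compat; apply lt_0_INR; [lia|apply Hf]. }
  destruct (is_lub_approx _ r (r / 2) Hr) as [t [[x [Hx ->]] Ht]]; [lra|].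
  exists n. split; [lia|]. split; [lia|]. exists x. split; [exact Hx|].
  assert (INR (f n) > 0) by (apply lt_0_INR, Hf).
  replace (INR n / (2 * INR (f n))) with (INR n / INR (f n) / 2) by (field; lra). lra.
Qed.

Section RealMultiples.

Variables (A : CStarAlgebra) (a : A).

Lemma cnorm_pos : a <> czero A -> cnorm A a > 0.
Proof.
  intros Ha. destruct (cnorm_nonneg A a) as [|E]; [lra|].
  exfalso. apply Ha, cnorm_eq0. auto.
Qed.

Lemma cnorm_rscal t : cnorm A (cscal A (t, 0) a) = Rabs t * cnorm A a.
Proof.
  rewrite cnorm_scal. unfold Cmod; cbn [fst snd].
  replace (t * t + 0 * 0) with (Rsqr t) by (unfold Rsqr; ring).
  rewrite sqrt_Rsqr_abs. reflexivity.
Qed.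

Lemma cnorm_rscal_sub u v :
  cnorm A (csub A (cscal A (u, 0) a) (cscal A (v, 0) a)) = Rabs (u - v) * cnorm A a.
Proof.
  assert (E : cscal A (u, 0) a = cadd A (cscal A (u - v, 0) a) (cscal A (v, 0) a)).
  { rewrite <- cscal_addl. unfold Cadd; cbn [fst snd]. f_equal. f_equal; ring. }
  unfold csub. rewrite E, <- cadd_assoc, cadd_opp, cadd_0. apply cnorm_rscal.
Qed.

Context {X : Type} (d : X -> X -> R).
Hypothesis Ha : a <> czero A.

Lemma in_Cb_rscal (H : X -> R) (M : R) :
  continuous_real d H -> (forall z, Rabs (H z) <= M) ->
  in_Cb d A (fun z => cscal A (H z, 0) a).
Proof.
  intros Hcont Hbound. pose proof cnorm_pos Ha as Hna. split.
  - intros x eps Heps. destruct (Hcont x (eps / cnorm A a)) as [delta [Hdelta Hx]].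
    { apply Rdiv_lt_0_compat; lra. }
    exists delta. split; [exact Hdelta|]. intros y Hy.
    rewrite cnorm_rscal_sub. specialize (Hx y Hy).
    apply (Rmult_lt_compat_r (cnorm A a)) in Hx; [|lra].
    replace (eps / cnorm A a * cnorm A a) with eps in Hx by (field; lra). exact Hx.
  - exists (M * cnorm A a). intros z. rewrite cnorm_rscal.
    apply Rmult_le_compat_r; [lra|apply Hbound].
Qed.

Lemma in_Df_rscal (Y : nat -> X -> Prop) (f : nat -> nat) (H : X -> R) (M C : R) :
  continuous_real d H -> (forall z, Rabs (H z) <= M) ->
  (forall n x y, (n >= 1)%nat -> Y n x -> Y n y -> d x y < 1 / INR (f n) ->
     Rabs (H x - H y) <= C / INR n) ->
  in_Df d A Y f (fun z => cscal A (H z, 0) a).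
Proof.
  intros Hcont Hbound Hosc. pose proof cnorm_pos Ha as Hna.
  split; [exact (in_Cb_rscal H M Hcont Hbound)|].
  intros eps Heps. set (C' := Rabs C + 1).
  assert (HC' : C' > 0) by (unfold C'; pose proof (Rabs_pos C); lra).
  destruct (archimed_cor1 (eps / (C' * cnorm A a))) as [N0 [HN0 HN0pos]].
  { apply Rdiv_lt_0_compat; nra. }
  exists N0. intros n Hn x y Hx Hy Hxy. rewrite cnorm_rscal_sub.
  specialize (Hosc n x y ltac:(lia) Hx Hy Hxy).
  assert (Hinv : / INR n <= / INR N0).
  { apply Rinv_le_contravar; [apply lt_0_INR; lia|apply le_INR; lia]. }
  assert (HCn : C / INR n <= C' * / INR N0).
  { unfold Rdiv. pose proof (RRle_abs C).
    assert (0 < / INR n) by (apply Rinv_0_lt_compat, lt_0_INR; lia).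
    apply Rle_trans with (C' * / INR n).
    - apply Rmult_le_compat_r; unfold C'; lra.
    - apply Rmult_le_compat_l; lra. }
  assert (Hsmall : C' * / INR N0 * cnorm A a < eps).
  { apply (Rmult_lt_compat_l (C' * cnorm A a)) in HN0; [|nra].
    replace (C' * cnorm A a * (eps / (C' * cnorm A a))) with eps in HN0 by (field; lra).
    lra. }
  apply (Rle_lt_trans _ (C' * / INR N0 * cnorm A a)); [|exact Hsmall].
  apply Rmult_le_compat_r; lra.
Qed.

Lemma not_in_C0_of_escaping (Y : nat -> X -> Prop) (G : X -> A) (c : R) :
  locally_finite_family d Y -> c > 0 ->
  (forall N, exists n, (n >= N)%nat /\ exists x, Y n x /\ cnorm A (G x) >= c) ->
  ~ in_C0 d A G.
Proof.
  intros HYlf Hc Hesc [_ HC0]. destruct (HC0 c Hc) as [K [HK Hout]].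
  apply (HYlf K HK). intros N. destruct (Hesc N) as [n [Hn [x [Hx Hgx]]]].
  exists n. split; [exact Hn|]. exists x. split; [exact Hx|].
  apply NNPP. intro HxK. specialize (Hout x HxK). lra.
Qed.

End RealMultiples.

Theorem lemma2p4 (X : Type) (d : X -> X -> R) (A : CStarAlgebra)
  (Y : nat -> X -> Prop) (phi : nat -> X -> X) (f : nat -> nat) :
  is_metric d ->
  polish d ->
  locally_compact d ->
  ~ is_compact d (fun _ => True) ->
  (exists a : A, a <> czero A) ->
  (forall n, is_compact d (Y n)) ->
  (forall n, ~ exists l : list X, forall x, Y n x -> In x l) ->
  (forall m n, m <> n -> forall x, Y m x -> Y n x -> False) ->
  (forall K, is_compact d K ->
     ~ (forall N, exists n, (n >= N)%nat /\ exists x, Y n x /\ K x)) ->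
  (forall n, homeo_partial d (Y n) (phi n)) ->
  (forall n, (f n > 0)%nat) ->
  (forall N, exists n, (n >= N)%nat /\
     exists r, is_radius d (Y n) (phi n) r /\ r >= INR n / INR (f n)) ->
  exists g : X -> A,
    in_Df d A Y f g /\
    ~ in_C0 d A (fun x => csub A (g (glue Y phi x)) (g x)).
Proof.
  intros Hd _ Hlc _ [a Ha] HYc _ HYdisj HYlf Hphi Hf Hrad.
  destruct (strictly_increasing_subsequence _ (displaced_points_often d Y phi f Hf Hrad))
    as [nk [Hnk Hincr]].
  destruct (choice _ (fun k => proj2 (Hnk k))) as [c Hc].
  set (r k := d (c k) (phi (nk k) (c k))).
  assert (Hr : forall k, r k > INR (nk k) / (2 * INR (f (nk k)))) by apply Hc.
  assert (Hrpos : forall k, r k > 0).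
  { intros k. eapply Rlt_trans; [|apply Hr]. apply Rdiv_lt_0_compat.
    - apply lt_0_INR, Hnk.
    - apply Rmult_lt_0_compat; [lra|apply lt_0_INR, Hf]. }
  destruct (cone_extension d Y Hd Hlc HYc HYdisj HYlf nk c r Hincr Hrpos)
    as [H [Hcont [H01 [Hon Hoff]]]].
  exists (fun z => cscal A (H z, 0) a). split.
  - apply (in_Df_rscal A a d Ha Y f H 1 2 Hcont).
    + intros z. rewrite Rabs_pos_eq; apply H01.
    + exact (piecewise_cone_oscillation d Y Hd H nk f c r Hf Hr Hon Hoff).
  - apply (not_in_C0_of_escaping A d Y _ (cnorm A a) HYlf (cnorm_pos A a Ha)).
    intros N. exists (nk N). split; [apply strictly_increasing_ge, Hincr|].
    destruct (Hc N) as [HcN _]. exists (c N). split; [exact HcN|].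
    destruct (Hphi (nk N)) as [Hmaps _].
    rewrite (glue_on_piece Y phi (nk N) (c N) HYdisj HcN), cnorm_rscal_sub,
      (Hon N _ (Hmaps _ HcN)), (Hon N _ HcN), (cone_drop d Hd _ _ (Hrpos N)).
    + lra.
    + rewrite (dist_sym d Hd). apply Rle_ge, Rle_refl.
Qed.
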